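(* Let $\zeta>0$ and $1\le k<d$, and let $\alpha_1\ge\cdots\ge\alpha_k>\zeta\ge\alpha_{k+1}\ge\cdots\ge\alpha_d\ge0$. Let $\beta_1,\dots,\beta_d$ be a permutation of $\alpha_1,\dots,\alpha_d$. Define $\alpha'_i=\alpha_i$ for $i\le k$ and $\alpha'_{k+1}=\zeta$, and let $L=\min\{k,\ln(\alpha_1/\zeta)\}$. Then \[ \sum_{i=1}^d(\sqrt{\alpha_i}-\sqrt{\beta_i})^2\le4\sum_{j=1}^k\frac{\alpha'_j-\alpha'_{j+1}}{\alpha'_j}\sum_{i=1}^j(\alpha_i-\beta_i)+d\zeta+8kL\zeta. \] *)

From Stdlib Require Import Reals Lra Lia List Permutation.
Open Scope R_scope.

Fixpoint sum1 (n : nat) (f : nat -> R) : R :=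
  match n with
  | O => 0
  | S m => sum1 m f + f (S m)
  end.

(* alpha'_j = alpha_j for j <= k, and zeta otherwise (only used at j = k+1). *)
Definition alpha' (alpha : nat -> R) (k : nat) (zeta : R) (j : nat) : R :=
  if (j <=? k)%nat then alpha j else zeta.

From Stdlib Require Import Reals Lra Lia List Permutation.
Open Scope R_scope.

(* Since [sum a = sum b], [sum (sqrt a_i - sqrt b_i)^2 = 2 sum sqrt a_i (sqrt a_i - sqrt b_i)],
   which summation by parts turns into [2 sum_j (sqrt a_j - sqrt a_(j+1)) D_j] with
   [D_j = sum_(i<=j) (sqrt a_i - sqrt b_i)].  For [j <= k] a rearrangement argument gives
   [sqrt a_j D_j <= S_j = sum_(i<=j) (a_i - b_i)], producing the weighted sum of the [S_j].
   For [j >= k] one only has [D_j <= d sqrt zeta / 2 + E] with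
   [E = sum_(i>k) (sqrt b_i - sqrt zeta)_+], the mass of large values moved past position [k];
   these terms contribute [d zeta + 2 sqrt zeta E].  Each such [b_i] is then charged to the
   [S_j]: [(sqrt x - sqrt zeta)_+^2] telescopes along the thresholds [alpha'_j] into
   [sum_j w_j (x - alpha'_(j+1))_+], the [alpha'_(j+1)]-excess of the [b_i] with [i > j] is
   at most [S_j], and at most [k] of the [b_i] with [i > k] exceed [zeta].  The logarithm
   comes from comparing [sqrt zeta (sqrt x - sqrt zeta)] with [(sqrt x - sqrt zeta)^2] when
   [x] is close to [zeta]. *)

Lemma sum1_ext n f g : (forall i, (1 <= i <= n)%nat -> f i = g i) -> sum1 n f = sum1 n g.
Proof.
  induction n as [|n IH]; simpl; intros H; [reflexivity|].
  rewrite IH by (intros; apply H; lia). rewrite (H (S n)) by lia. reflexivity.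
Qed.

Lemma sum1_le n f g : (forall i, (1 <= i <= n)%nat -> f i <= g i) -> sum1 n f <= sum1 n g.
Proof.
  induction n as [|n IH]; simpl; intros H; [lra|].
  apply Rplus_le_compat; [apply IH; intros; apply H; lia | apply H; lia].
Qed.

Lemma sum1_plus n f g : sum1 n (fun i => f i + g i) = sum1 n f + sum1 n g.
Proof. induction n as [|n IH]; simpl; [ring | rewrite IH; ring]. Qed.

Lemma sum1_minus n f g : sum1 n (fun i => f i - g i) = sum1 n f - sum1 n g.
Proof. induction n as [|n IH]; simpl; [ring | rewrite IH; ring]. Qed.

Lemma sum1_scal n c f : sum1 n (fun i => c * f i) = c * sum1 n f.
Proof. induction n as [|n IH]; simpl; [ring | rewrite IH; ring]. Qed.

Lemma sum1_const n c : sum1 n (fun _ => c) = INR n * c.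
Proof. induction n as [|n IH]; simpl sum1; [simpl; ring | rewrite IH, S_INR; ring]. Qed.

Lemma sum1_telescope n g : sum1 n (fun j => g j - g (S j)) = g 1%nat - g (S n).
Proof. induction n as [|n IH]; simpl; [ring | rewrite IH; ring]. Qed.

Lemma sum1_by_parts n u v : sum1 n (fun i => u i * v i) =
  sum1 n (fun j => (u j - u (S j)) * sum1 j v) + u (S n) * sum1 n v.
Proof. induction n as [|n IH]; simpl; [ring | rewrite IH; ring]. Qed.

Lemma sum1_comm n m F : sum1 n (fun j => sum1 m (fun i => F j i)) =
  sum1 m (fun i => sum1 n (fun j => F j i)).
Proof.
  induction n as [|n IH]; simpl.
  - rewrite sum1_const; ring.
  - rewrite IH, <- sum1_plus. reflexivity.
Qed.

Lemma sum1_if_le n j f : (j <= n)%nat ->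
  sum1 n (fun i => if (i <=? j)%nat then f i else 0) = sum1 j f.
Proof.
  induction n as [|n IH]; intros Hj.
  - replace j with 0%nat by lia; reflexivity.
  - destruct (Nat.eq_dec j (S n)) as [->|Hne].
    + apply sum1_ext; intros i Hi. destruct (Nat.leb_spec i (S n)); [reflexivity | lia].
    + change (sum1 (S n) ?F) with (sum1 n F + F (S n)); cbv beta.
      rewrite IH by lia. destruct (Nat.leb_spec (S n) j); [lia | ring].
Qed.

Definition sum1_after (j n : nat) (f : nat -> R) : R :=
  sum1 n (fun i => if (j <? i)%nat then f i else 0).

Lemma sum1_split n j f : (j <= n)%nat -> sum1 n f = sum1 j f + sum1_after j n f.
Proof.
  intros Hj. unfold sum1_after. rewrite <- (sum1_if_le n j f Hj), <- sum1_plus.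
  apply sum1_ext; intros i Hi.
  destruct (Nat.leb_spec i j), (Nat.ltb_spec j i); try lia; ring.
Qed.

Lemma sum1_after_le j n f g : (forall i, (j < i <= n)%nat -> f i <= g i) ->
  sum1_after j n f <= sum1_after j n g.
Proof.
  intros H. unfold sum1_after. apply sum1_le; intros i Hi.
  destruct (Nat.ltb_spec j i); [apply H; lia | lra].
Qed.

Lemma sum1_after_zero j n : sum1_after j n (fun _ => 0) = 0.
Proof.
  unfold sum1_after. transitivity (sum1 n (fun _ => 0)).
  - apply sum1_ext; intros i _. now destruct (j <? i)%nat.
  - rewrite sum1_const; ring.
Qed.

Lemma sum1_after_nonneg j n f : (forall i, (j < i <= n)%nat -> 0 <= f i) ->
  0 <= sum1_after j n f.
Proof. intros H. rewrite <- (sum1_after_zero j n). now apply sum1_after_le. Qed.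

Lemma sum1_after_antimono k j n f : (k <= j)%nat ->
  (forall i, (k < i <= n)%nat -> 0 <= f i) -> sum1_after j n f <= sum1_after k n f.
Proof.
  intros Hkj H. unfold sum1_after. apply sum1_le; intros i Hi.
  destruct (Nat.ltb_spec j i), (Nat.ltb_spec k i); try lia; try lra. apply H; lia.
Qed.

Lemma sum1_after_plus j n f g :
  sum1_after j n (fun i => f i + g i) = sum1_after j n f + sum1_after j n g.
Proof.
  unfold sum1_after. rewrite <- sum1_plus. apply sum1_ext; intros i _.
  destruct (j <? i)%nat; ring.
Qed.

Lemma sum1_after_scal j n c f : sum1_after j n (fun i => c * f i) = c * sum1_after j n f.
Proof.
  unfold sum1_after. rewrite <- sum1_scal. apply sum1_ext; intros i _.
  destruct (j <? i)%nat; ring.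
Qed.

Lemma sum1_after_comm j n m F :
  sum1 m (fun l => sum1_after j n (F l)) = sum1_after j n (fun i => sum1 m (fun l => F l i)).
Proof.
  unfold sum1_after. rewrite sum1_comm. apply sum1_ext; intros i _.
  destruct (j <? i)%nat; [reflexivity|].
  rewrite sum1_const; ring.
Qed.

Lemma sum1_fold_right n h : sum1 n h = fold_right Rplus 0 (map h (seq 1 n)).
Proof.
  induction n as [|n IH]; [reflexivity|].
  rewrite seq_S, map_app, fold_right_app. simpl sum1. rewrite IH. simpl.
  generalize (h (S n)); clear IH; induction (map h (seq 1 n)) as [|x l IHl]; intros y; simpl.
  - lra.
  - rewrite <- IHl; lra.
Qed.

Lemma sum1_perm d (a b : nat -> R) :
  Permutation (map a (seq 1 d)) (map b (seq 1 d)) ->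
  forall f : R -> R, sum1 d (fun i => f (a i)) = sum1 d (fun i => f (b i)).
Proof.
  intros Hp f. rewrite !sum1_fold_right, <- (map_map a f), <- (map_map b f).
  apply (Permutation_map f) in Hp. induction Hp; simpl; lra.
Qed.

Lemma perm_range d (a b : nat -> R) : Permutation (map a (seq 1 d)) (map b (seq 1 d)) ->
  forall i, (1 <= i <= d)%nat -> exists m, (1 <= m <= d)%nat /\ b i = a m.
Proof.
  intros Hp i Hi.
  assert (Hin : In (b i) (map a (seq 1 d))).
  { apply Permutation_in with (map b (seq 1 d)); [now apply Permutation_sym|].
    apply in_map, in_seq; lia. }
  apply in_map_iff in Hin as [m [Hm Hm']]. apply in_seq in Hm'. exists m; split; [lia | auto].
Qed.

Section Rearrangement.

Variables (d : nat) (a b : nat -> R).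
Hypothesis hperm : forall f : R -> R, sum1 d (fun i => f (a i)) = sum1 d (fun i => f (b i)).

Lemma sum1_after_rearrange g j : (j <= d)%nat -> (forall i, (j < i <= d)%nat -> g (a i) = 0) ->
  sum1_after j d (fun i => g (b i)) = sum1 j (fun i => g (a i) - g (b i)).
Proof.
  intros Hj Hg.
  assert (Ha : sum1_after j d (fun i => g (a i)) = 0).
  { rewrite <- (sum1_after_zero j d). apply Rle_antisym; apply sum1_after_le;
      intros i Hi; rewrite Hg by lia; lra. }
  pose proof (hperm g) as Hp.
  rewrite (sum1_split d j (fun i => g (a i))), (sum1_split d j (fun i => g (b i))), Ha in Hp
    by exact Hj.
  rewrite sum1_minus. lra.
Qed.

Lemma sum1_after_count_le g j : (j <= d)%nat -> (forall x, 0 <= g x <= 1) ->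
  (forall i, (j < i <= d)%nat -> g (a i) = 0) -> sum1_after j d (fun i => g (b i)) <= INR j.
Proof.
  intros Hj Hg Hga. rewrite sum1_after_rearrange by assumption.
  rewrite <- (Rmult_1_r (INR j)), <- sum1_const. apply sum1_le; intros i _.
  pose proof (Hg (a i)); pose proof (Hg (b i)). lra.
Qed.

Lemma sum1_rearrange_le phi j : (j <= d)%nat ->
  (forall i, (1 <= i <= j)%nat -> 0 <= phi (a i)) ->
  (forall i, (j < i <= d)%nat -> phi (a i) <= 0) ->
  sum1 j (fun i => phi (b i)) <= sum1 j (fun i => phi (a i)).
Proof.
  intros Hj Hpos Hneg.
  pose (g := fun x => Rmax (phi x) 0).
  pose proof (sum1_after_rearrange g j Hj (fun i Hi => Rmax_right _ _ (Hneg i Hi))) as Hr.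
  rewrite sum1_minus in Hr.
  assert (Hga : sum1 j (fun i => g (a i)) = sum1 j (fun i => phi (a i))).
  { apply sum1_ext; intros i Hi. apply Rmax_left, Hpos, Hi. }
  assert (Hgb : sum1 j (fun i => phi (b i)) <= sum1 j (fun i => g (b i)))
    by (apply sum1_le; intros; apply Rmax_l).
  assert (0 <= sum1_after j d (fun i => g (b i)))
    by (apply sum1_after_nonneg; intros; apply Rmax_r).
  lra.
Qed.

Lemma sum1_after_excess_le j y : (j <= d)%nat ->
  (forall i, (1 <= i <= j)%nat -> y <= a i) -> (forall i, (j < i <= d)%nat -> a i <= y) ->
  sum1_after j d (fun i => Rmax (b i - y) 0) <= sum1 j (fun i => a i - b i).
Proof.
  intros Hj Hup Hlo.
  rewrite (sum1_after_rearrange (fun x => Rmax (x - y) 0)) by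
    (assumption || (intros i Hi; apply Rmax_right; specialize (Hlo i Hi); lra)).
  apply sum1_le; intros i Hi.
  rewrite Rmax_left by (specialize (Hup i Hi); lra).
  pose proof (Rmax_l (b i - y) 0). lra.
Qed.

Lemma sqrt_mul_root_gap_le j :
  (forall i i', (1 <= i <= i')%nat -> (i' <= d)%nat -> a i' <= a i) ->
  (forall i, (1 <= i <= d)%nat -> 0 <= a i) -> (1 <= j <= d)%nat ->
  sqrt (a j) * sum1 j (fun i => sqrt (a i) - sqrt (b i)) <= sum1 j (fun i => a i - b i).
Proof.
  intros Hanti Ha0 Hj. set (c := sqrt (a j)).
  pose (phi := fun x => x - c * sqrt x).
  assert (Hphi : forall x, 0 <= x -> phi x = sqrt x * (sqrt x - c)).
  { intros x Hx. unfold phi. rewrite <- (sqrt_sqrt x Hx) at 1. ring. }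
  assert (Hkey : sum1 j (fun i => phi (b i)) <= sum1 j (fun i => phi (a i))).
  { apply sum1_rearrange_le; [lia | intros i Hi ..].
    - rewrite Hphi by (apply Ha0; lia).
      assert (c <= sqrt (a i)) by (apply sqrt_le_1_alt, Hanti; lia).
      apply Rmult_le_pos; [apply sqrt_pos | lra].
    - rewrite Hphi by (apply Ha0; lia).
      assert (sqrt (a i) <= c) by (apply sqrt_le_1_alt, Hanti; lia).
      pose proof (sqrt_pos (a i)). nra. }
  assert (Eq : sum1 j (fun i => a i - b i) - c * sum1 j (fun i => sqrt (a i) - sqrt (b i))
     = sum1 j (fun i => phi (a i)) - sum1 j (fun i => phi (b i))).
  { rewrite <- sum1_scal, <- !sum1_minus. apply sum1_ext; intros; unfold phi; ring. }
  lra.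
Qed.

Lemma root_gap_le k z j : 0 <= z -> (forall i, (k < i <= d)%nat -> a i <= z) ->
  (k <= j <= d)%nat ->
  sum1 j (fun i => sqrt (a i) - sqrt (b i))
  <= INR d / 2 * sqrt z + sum1_after k d (fun i => Rmax (sqrt (b i) - sqrt z) 0).
Proof.
  intros Hz Hsmall Hj. set (r := sqrt z).
  pose (low := fun x => Rmin (sqrt x) r).
  pose (high := fun x => Rmax (sqrt x - r) 0).
  assert (Hsplit : forall x, sqrt x = low x + high x).
  { intros x; unfold low, high, Rmin, Rmax.
    destruct (Rle_dec (sqrt x) r), (Rle_dec (sqrt x - r) 0); lra. }
  assert (Hlow : forall x, 0 <= low x <= r).
  { intros x. split; [apply Rmin_glb; [apply sqrt_pos | apply sqrt_pos] | apply Rmin_r]. }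
  set (X := sum1 j (fun i => low (a i) - low (b i))).
  assert (HXj : X <= INR j * r).
  { unfold X. rewrite <- sum1_const. apply sum1_le; intros i _.
    pose proof (Hlow (a i)); pose proof (Hlow (b i)); lra. }
  assert (HXd : X <= (INR d - INR j) * r).
  { assert (Htot : sum1 d (fun i => low (a i) - low (b i)) = 0)
      by (rewrite sum1_minus, (hperm low); ring).
    rewrite (sum1_split d j) in Htot by lia. fold X in Htot.
    pose proof (sum1_split d j (fun _ => r) ltac:(lia)) as Hr. rewrite !sum1_const in Hr.
    assert (0 <= sum1_after j d (fun i => (low (a i) - low (b i)) + r)).
    { apply sum1_after_nonneg; intros i _. pose proof (Hlow (a i)); pose proof (Hlow (b i)); lra. }
    rewrite sum1_after_plus in H. lra. }
  assert (Hhigh : sum1 j (fun i => high (a i) - high (b i))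
                  <= sum1_after k d (fun i => high (b i))).
  { rewrite <- sum1_after_rearrange; [| lia |].
    - apply sum1_after_antimono; [lia | intros; apply Rmax_r].
    - intros i Hi. apply Rmax_right.
      assert (sqrt (a i) <= r) by (apply sqrt_le_1_alt, Hsmall; lia). lra. }
  assert (HD : sum1 j (fun i => sqrt (a i) - sqrt (b i))
               = X + sum1 j (fun i => high (a i) - high (b i))).
  { unfold X. rewrite <- sum1_plus. apply sum1_ext; intros i _.
    rewrite (Hsplit (a i)), (Hsplit (b i)). ring. }
  assert (X <= INR d / 2 * r) by (clear - HXj HXd; lra).
  rewrite HD. unfold high in *. lra.
Qed.

Lemma root_gap_total : sum1 d (fun i => sqrt (a i) - sqrt (b i)) = 0.
Proof. rewrite sum1_minus, (hperm sqrt). ring. Qed.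

Lemma sum1_sqr_root_gap : (forall i, (1 <= i <= d)%nat -> 0 <= a i /\ 0 <= b i) ->
  sum1 d (fun i => (sqrt (a i) - sqrt (b i)) ^ 2)
  = 2 * sum1 d (fun i => sqrt (a i) * (sqrt (a i) - sqrt (b i))).
Proof.
  intros H0.
  transitivity (sum1 d (fun i => 2 * (sqrt (a i) * (sqrt (a i) - sqrt (b i))) + (b i - a i))).
  - apply sum1_ext; intros i Hi. destruct (H0 i Hi) as [Ha Hb].
    replace (b i - a i) with (sqrt (b i) * sqrt (b i) - sqrt (a i) * sqrt (a i))
      by (rewrite !sqrt_sqrt by assumption; ring).
    ring.
  - pose proof (hperm (fun x => x)) as Hsum.
    rewrite sum1_plus, sum1_scal, sum1_minus. simpl in Hsum. change (sum1 d a = sum1 d b) in Hsum. rewrite Hsum. ring.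
Qed.

End Rearrangement.

Lemma antitone_of_succ d (a : nat -> R) :
  (forall i, (1 <= i)%nat -> (i < d)%nat -> a (S i) <= a i) ->
  forall i j, (1 <= i <= j)%nat -> (j <= d)%nat -> a j <= a i.
Proof.
  intros H i j Hij Hj. induction j as [|j IH]; [lia|].
  destruct (Nat.eq_dec i (S j)) as [->|Hne]; [lra|].
  apply Rle_trans with (a j); [apply H; lia | apply IH; lia].
Qed.

Lemma sqr_excess_sqrt_step c c' x : 0 < c' -> c' <= c -> 0 <= x ->
  (Rmax (sqrt x - sqrt c') 0) ^ 2 - (Rmax (sqrt x - sqrt c) 0) ^ 2
  <= (c - c') / c * Rmax (x - c') 0.
Proof.
  intros Hc' Hcc' Hx.
  apply (Rmult_le_reg_r c); [lra|].
  replace ((c - c') / c * Rmax (x - c') 0 * c) with ((c - c') * Rmax (x - c') 0) by (field; lra).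
  assert (Hq : 0 < sqrt c') by (apply sqrt_lt_R0; lra).
  assert (Hqp : sqrt c' <= sqrt c) by (apply sqrt_le_1_alt; lra).
  pose proof (sqrt_pos x) as HX.
  pose proof (sqrt_sqrt c ltac:(lra)) as Hc2.
  pose proof (sqrt_sqrt c' ltac:(lra)) as Hc'2.
  pose proof (sqrt_sqrt x Hx) as Hx2.
  set (p := sqrt c) in *. set (q := sqrt c') in *. set (X := sqrt x) in *.
  rewrite <- Hc2, <- Hc'2, <- Hx2.
  destruct (Rle_dec X q) as [Hxq|Hxq]; [| destruct (Rle_dec X p) as [Hxp|Hxp]].
  - rewrite (Rmax_right (X - q)), (Rmax_right (X - p)), (Rmax_right (X * X - q * q)) by nra.
    lra.
  - rewrite (Rmax_left (X - q)), (Rmax_right (X - p)), (Rmax_left (X * X - q * q)) by nra.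
    assert (0 <= (X - q) * q * (2 * p * p - q * X - q * q)).
    { apply Rmult_le_pos; [apply Rmult_le_pos; lra | nra]. }
    nra.
  - rewrite (Rmax_left (X - q)), (Rmax_left (X - p)), (Rmax_left (X * X - q * q)) by nra.
    assert (0 <= (p - q) * ((p + q) * (X - p) ^ 2 + 2 * p * q * (X - p) + q * (p - q) * (2 * p + q))).
    { apply Rmult_le_pos; [lra|].
      assert (0 <= (p + q) * (X - p) ^ 2) by (apply Rmult_le_pos; [lra | apply pow2_ge_0]).
      assert (0 <= 2 * p * q * (X - p)) by (apply Rmult_le_pos; [nra | lra]).
      assert (0 <= q * (p - q) * (2 * p + q)) by (apply Rmult_le_pos; [apply Rmult_le_pos|]; lra).
      lra. }
    nra.
Qed.

Lemma one_sub_inv_le_ln t : 0 < t -> 1 - / t <= ln t.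
Proof.
  intros Ht. pose proof (exp_ineq1_le (- ln t)) as H.
  rewrite exp_Ropp, exp_ln in H by exact Ht. lra.
Qed.

Lemma ln_div_pos x z : 0 < z < x -> 0 < ln (x / z).
Proof.
  intros Hz. rewrite <- ln_1. apply ln_increasing; [lra|].
  apply (Rmult_lt_reg_r z); [lra|]. unfold Rdiv. rewrite Rmult_assoc, Rinv_l by lra. lra.
Qed.

Lemma rel_excess_le_ln r X : 0 < r < X -> X - r <= r -> (X - r) / (2 * r) <= ln (X * X / (r * r)).
Proof.
  intros Hr Hgap.
  apply Rle_trans with (1 - / (X * X / (r * r))).
  2: { apply one_sub_inv_le_ln. apply Rdiv_lt_0_compat; nra. }
  assert (E : 1 - / (X * X / (r * r)) - (X - r) / (2 * r)
              = (X - r) * (3 * r * r - (X - r) * (X - r)) / (2 * r * (X * X))) by (field; lra).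
  assert ((X - r) * (X - r) <= r * r) by (apply Rmult_le_compat; lra).
  assert (0 <= (X - r) * (3 * r * r - (X - r) * (X - r)) / (2 * r * (X * X))).
  { unfold Rdiv. apply Rmult_le_pos; [apply Rmult_le_pos; nra | apply Rlt_le, Rinv_0_lt_compat, Rmult_lt_0_compat; nra]. }
  lra.
Qed.

Lemma sqrt_excess_le z x a1 kk : 0 < z < a1 -> 1 <= kk -> 0 <= x <= a1 ->
  2 * sqrt z * Rmax (sqrt x - sqrt z) 0
  <= 2 * (Rmax (sqrt x - sqrt z) 0) ^ 2
     + 8 * Rmin kk (ln (a1 / z)) * z * (if Rlt_dec z x then 1 else 0).
Proof.
  intros Hz Hk Hx.
  pose proof (ln_div_pos a1 z Hz).
  assert (HL : 0 <= Rmin kk (ln (a1 / z))) by (apply Rmin_glb; lra).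
  set (L := Rmin kk (ln (a1 / z))) in *.
  destruct (Rlt_dec z x) as [Hzx|Hzx].
  2: { assert (sqrt x <= sqrt z) by (apply sqrt_le_1_alt; lra).
       rewrite Rmax_right by lra. lra. }
  assert (Hlt : sqrt z < sqrt x) by (apply sqrt_lt_1; lra).
  assert (Hr0 : 0 < sqrt z) by (apply sqrt_lt_R0; lra).
  rewrite Rmax_left by lra.
  destruct (Rle_dec (sqrt x - sqrt z) (sqrt z)) as [Hs|Hs].
  2: { assert (0 <= L * z) by (apply Rmult_le_pos; lra). nra. }
  assert (HLs : (sqrt x - sqrt z) / (2 * sqrt z) <= L).
  { apply Rmin_glb.
    - apply Rle_trans with (1 / 2); [| lra].
      apply (Rmult_le_reg_r (2 * sqrt z)); [lra|].
      replace ((sqrt x - sqrt z) / (2 * sqrt z) * (2 * sqrt z)) with (sqrt x - sqrt z)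
        by (field; lra). lra.
    - apply Rle_trans with (ln (x / z)).
      + replace (x / z) with (sqrt x * sqrt x / (sqrt z * sqrt z))
          by (rewrite !sqrt_sqrt by lra; reflexivity).
        apply rel_excess_le_ln; lra.
      + destruct (Rle_lt_or_eq_dec x a1 (proj2 Hx)) as [Hxa|<-]; [|lra].
        left. apply ln_increasing; [apply Rdiv_lt_0_compat; lra|].
        unfold Rdiv. apply Rmult_lt_compat_r; [apply Rinv_0_lt_compat|]; lra. }
  assert (Hz2 : (sqrt x - sqrt z) / (2 * sqrt z) * (sqrt z * sqrt z)
                = (sqrt x - sqrt z) * sqrt z / 2) by (field; lra).
  rewrite sqrt_sqrt in Hz2 by lra.
  assert (L * z >= (sqrt x - sqrt z) * sqrt z / 2).
  { rewrite <- Hz2. apply Rle_ge, Rmult_le_compat_r; lra. }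
  nra.
Qed.

Lemma sqrt_sub_mul_le c q D S : 0 < c -> 0 <= q <= c -> sqrt c * D <= S -> 0 <= S ->
  (sqrt c - sqrt q) * D <= (c - q) / c * S.
Proof.
  intros Hc Hq HD HS.
  assert (Hsc : 0 < sqrt c) by (apply sqrt_lt_R0; lra).
  assert (Hsq : sqrt q <= sqrt c) by (apply sqrt_le_1_alt; lra).
  pose proof (sqrt_pos q).
  apply (Rmult_le_reg_r c); [lra|].
  replace ((c - q) / c * S * c) with ((c - q) * S) by (field; lra).
  pose proof (sqrt_sqrt c ltac:(lra)) as Hc2. pose proof (sqrt_sqrt q ltac:(lra)) as Hq2.
  set (p := sqrt c) in *. set (s := sqrt q) in *. rewrite <- Hc2, <- Hq2.
  assert ((p - s) * p * (p * D) <= (p - s) * p * S) by (apply Rmult_le_compat_l; nra).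
  assert ((p - s) * p * S <= (p - s) * (p + s) * S) by (apply Rmult_le_compat_r; nra).
  nra.
Qed.

Section Bound.

Variables (d k : nat) (z : R) (a b : nat -> R).
Hypotheses (hz : 0 < z) (hk : (1 <= k)%nat) (hkd : (k < d)%nat).
Hypothesis ha_anti : forall i j, (1 <= i <= j)%nat -> (j <= d)%nat -> a j <= a i.
Hypotheses (hak : z < a k) (hak1 : a (S k) <= z) (had : 0 <= a d).
Hypothesis hperm : forall f : R -> R, sum1 d (fun i => f (a i)) = sum1 d (fun i => f (b i)).
Hypothesis hb : forall i, (1 <= i <= d)%nat -> 0 <= b i <= a 1%nat.

Local Notation a' := (alpha' a k z).
Local Notation weight j := ((a' j - a' (S j)) / a' j).
Local Notation mass_gap j := (sum1 j (fun i => a i - b i)).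
Local Notation root_gap j := (sum1 j (fun i => sqrt (a i) - sqrt (b i))).
Local Notation W := (sum1 k (fun j => weight j * mass_gap j)).
Local Notation E := (sum1_after k d (fun i => Rmax (sqrt (b i) - sqrt z) 0)).
Local Notation B := (INR d / 2 * sqrt z + E).
Local Notation L := (Rmin (INR k) (ln (a 1%nat / z))).
(* Zero past [d], so that its telescoping sum ends at [0] whatever [a (S d)] is. *)
Local Notation cap j := (if (j <=? d)%nat then sqrt (Rmin (a j) z) else 0).

Lemma a_gt_z i : (1 <= i <= k)%nat -> z < a i.
Proof. intros Hi. apply Rlt_le_trans with (a k); [exact hak | apply ha_anti; lia]. Qed.

Lemma a_le_z i : (k < i <= d)%nat -> a i <= z.
Proof. intros Hi. apply Rle_trans with (a (S k)); [apply ha_anti; lia | exact hak1]. Qed.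

Lemma a_nonneg i : (1 <= i <= d)%nat -> 0 <= a i.
Proof. intros Hi. apply Rle_trans with (a d); [exact had | apply ha_anti; lia]. Qed.

Lemma alpha'_head j : (j <= k)%nat -> a' j = a j.
Proof. intros Hj. unfold alpha'. now rewrite (proj2 (Nat.leb_le j k) Hj). Qed.

Lemma alpha'_tail j : (k < j)%nat -> a' j = z.
Proof. intros Hj. unfold alpha'. now rewrite (proj2 (Nat.leb_gt j k) Hj). Qed.

Lemma alpha'_succ_between j : (1 <= j <= k)%nat -> z <= a' (S j) <= a j.
Proof.
  intros Hj. destruct (Nat.le_gt_cases (S j) k).
  - rewrite alpha'_head by lia. pose proof (a_gt_z (S j) ltac:(lia)). split; [lra | apply ha_anti; lia].
  - rewrite alpha'_tail by lia. pose proof (a_gt_z j Hj). lra.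
Qed.

Lemma weight_nonneg j : (1 <= j <= k)%nat -> 0 <= weight j.
Proof.
  intros Hj. pose proof (alpha'_succ_between j Hj). pose proof (a_gt_z j Hj).
  rewrite alpha'_head by lia. apply Rmult_le_pos; [lra | apply Rlt_le, Rinv_0_lt_compat; lra].
Qed.

Lemma excess_after_le_mass_gap j : (1 <= j <= k)%nat ->
  sum1_after k d (fun i => Rmax (b i - a' (S j)) 0) <= mass_gap j.
Proof.
  intros Hj. pose proof (alpha'_succ_between j Hj).
  apply Rle_trans with (sum1_after j d (fun i => Rmax (b i - a' (S j)) 0)).
  { apply sum1_after_antimono; [lia | intros; apply Rmax_r]. }
  apply sum1_after_excess_le; [exact hperm | lia | intros i Hi ..].
  - apply Rle_trans with (a j); [lra | apply ha_anti; lia].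
  - destruct (Nat.le_gt_cases (S j) k).
    + rewrite alpha'_head by lia. apply ha_anti; lia.
    + rewrite alpha'_tail by lia. apply a_le_z; lia.
Qed.

Lemma mass_gap_nonneg j : (1 <= j <= k)%nat -> 0 <= mass_gap j.
Proof.
  intros Hj. eapply Rle_trans; [| exact (excess_after_le_mass_gap j Hj)].
  apply sum1_after_nonneg; intros; apply Rmax_r.
Qed.

Lemma sqr_excess_le_weighted x : 0 <= x <= a 1%nat ->
  (Rmax (sqrt x - sqrt z) 0) ^ 2 <= sum1 k (fun j => weight j * Rmax (x - a' (S j)) 0).
Proof.
  intros Hx. pose (G := fun c => (Rmax (sqrt x - sqrt c) 0) ^ 2).
  assert (HG1 : G (a' 1%nat) = 0).
  { unfold G. rewrite alpha'_head by lia.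
    assert (sqrt x <= sqrt (a 1%nat)) by (apply sqrt_le_1_alt; lra).
    rewrite Rmax_right by lra. ring. }
  pose proof (sum1_telescope k (fun j => - G (a' j))) as Htel.
  cbv beta in Htel. rewrite (alpha'_tail (S k)) in Htel by lia.
  replace ((Rmax (sqrt x - sqrt z) 0) ^ 2) with (- G (a' 1%nat) - - G z) by (rewrite HG1; unfold G; ring).
  rewrite <- Htel. apply sum1_le; intros j Hj.
  pose proof (alpha'_succ_between j Hj). pose proof (alpha'_head j ltac:(lia)).
  replace (- G (a' j) - - G (a' (S j))) with (G (a' (S j)) - G (a' j)) by ring.
  apply sqr_excess_sqrt_step; lra.
Qed.

Lemma excess_after_bound : 2 * sqrt z * E <= 2 * W + 8 * INR k * L * z.
Proof.
  pose (ind := fun x => if Rlt_dec z x then 1 else 0).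
  pose (Q := fun j i => Rmax (b i - a' (S j)) 0).
  assert (Hz1 : z < a 1%nat) by (apply a_gt_z; lia).
  assert (HLz : 0 <= L * z).
  { apply Rmult_le_pos; [| lra]. apply Rmin_glb; [apply pos_INR |].
    apply Rlt_le, ln_div_pos; lra. }
  assert (Hcount : sum1_after k d (fun i => ind (b i)) <= INR k).
  { apply (sum1_after_count_le d a b hperm); [lia | |].
    - intros x. unfold ind. destruct (Rlt_dec z x); lra.
    - intros i Hi. unfold ind. pose proof (a_le_z i Hi).
      destruct (Rlt_dec z (a i)); [lra | reflexivity]. }
  assert (HW : sum1_after k d (fun i => sum1 k (fun j => weight j * Q j i)) <= W).
  { rewrite <- sum1_after_comm. apply sum1_le; intros j Hj.
    rewrite sum1_after_scal. apply Rmult_le_compat_l; [now apply weight_nonneg |].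
    now apply excess_after_le_mass_gap. }
  assert (Hpoint : forall i, (k < i <= d)%nat ->
    2 * sqrt z * Rmax (sqrt (b i) - sqrt z) 0
    <= 2 * sum1 k (fun j => weight j * Q j i) + 8 * L * z * ind (b i)).
  { intros i Hi. pose proof (hb i ltac:(lia)).
    pose proof (sqr_excess_le_weighted (b i) H).
    assert (1 <= INR k) by (apply (le_INR 1); lia).
    pose proof (sqrt_excess_le z (b i) (a 1%nat) (INR k) ltac:(lra) H1 H).
    unfold Q, ind. lra. }
  rewrite <- sum1_after_scal.
  eapply Rle_trans; [apply sum1_after_le, Hpoint |].
  rewrite sum1_after_plus, !sum1_after_scal.
  assert (8 * L * z * sum1_after k d (fun i => ind (b i)) <= 8 * L * z * INR k)
    by (apply Rmult_le_compat_l; lra).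
  lra.
Qed.

Lemma cap_antitone j : (1 <= j <= d)%nat -> cap (S j) <= cap j.
Proof.
  intros Hj. rewrite (proj2 (Nat.leb_le j d)) by lia.
  destruct (Nat.leb_spec (S j) d); [| apply sqrt_pos].
  apply sqrt_le_1_alt, Rle_min_compat_r, ha_anti; lia.
Qed.

Lemma cap_succ_head j : (1 <= j <= k)%nat -> cap j - cap (S j) = sqrt (a' (S j)) - sqrt (a (S j)).
Proof.
  intros Hj.
  rewrite (proj2 (Nat.leb_le j d)), (proj2 (Nat.leb_le (S j) d)) by lia.
  rewrite (Rmin_right (a j)) by (apply Rlt_le, a_gt_z; lia).
  destruct (Nat.le_gt_cases (S j) k).
  - rewrite alpha'_head, Rmin_right by (lia || apply Rlt_le, a_gt_z; lia). ring.
  - replace j with k by lia. rewrite alpha'_tail, Rmin_left by (lia || lra). ring.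
Qed.

Lemma cap_succ_tail j : (k < j < d)%nat -> cap j - cap (S j) = sqrt (a j) - sqrt (a (S j)).
Proof.
  intros Hj.
  rewrite (proj2 (Nat.leb_le j d)), (proj2 (Nat.leb_le (S j) d)) by lia.
  rewrite !Rmin_left by (apply a_le_z; lia). reflexivity.
Qed.

Lemma cap_step_mul_le j : (1 <= j <= d)%nat ->
  (cap j - cap (S j)) * root_gap j <= (cap j - cap (S j)) * B.
Proof.
  intros Hj. destruct (Nat.lt_ge_cases j k).
  - rewrite cap_succ_head, alpha'_head by lia.
    rewrite Rminus_diag, !Rmult_0_l. lra.
  - apply Rmult_le_compat_l; [pose proof (cap_antitone j Hj); lra |].
    apply (root_gap_le d a b hperm k z j); [lra | exact a_le_z | lia].
Qed.

Lemma sqrt_step_mul_le j : (1 <= j <= d)%nat ->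
  (sqrt (a j) - sqrt (a (S j))) * root_gap j
  <= (if (j <=? k)%nat then weight j * mass_gap j else 0) + (cap j - cap (S j)) * B.
Proof.
  intros Hj. destruct (Nat.leb_spec j k).
  - replace (sqrt (a j) - sqrt (a (S j)))
      with ((sqrt (a j) - sqrt (a' (S j))) + (cap j - cap (S j))) by (rewrite cap_succ_head by lia; ring).
    rewrite Rmult_plus_distr_r.
    apply Rplus_le_compat; [| now apply cap_step_mul_le].
    pose proof (alpha'_succ_between j ltac:(lia)). pose proof (a_gt_z j ltac:(lia)).
    rewrite (alpha'_head j) by lia.
    apply sqrt_sub_mul_le; [lra | lra | | now apply mass_gap_nonneg].
    apply (sqrt_mul_root_gap_le d a b hperm j ha_anti a_nonneg Hj).
  - rewrite Rplus_0_l.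
    replace ((sqrt (a j) - sqrt (a (S j))) * root_gap j) with ((cap j - cap (S j)) * root_gap j).
    { now apply cap_step_mul_le. }
    destruct (Nat.lt_ge_cases j d).
    + now rewrite cap_succ_tail by lia.
    + replace j with d by lia. rewrite (root_gap_total d a b hperm). ring.
Qed.

Lemma root_weighted_gap_le :
  sum1 d (fun i => sqrt (a i) * (sqrt (a i) - sqrt (b i))) <= W + B * sqrt z.
Proof.
  pose proof (sum1_by_parts d (fun i => sqrt (a i)) (fun i => sqrt (a i) - sqrt (b i))) as Hparts.
  cbv beta in Hparts. rewrite Hparts, (root_gap_total d a b hperm), Rmult_0_r, Rplus_0_r.
  eapply Rle_trans; [apply sum1_le; intros j Hj; exact (sqrt_step_mul_le j Hj) |].
  rewrite sum1_plus, sum1_if_le by lia.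
  replace (sum1 d (fun j => (cap j - cap (S j)) * B)) with (B * sum1 d (fun j => cap j - cap (S j)))
    by (rewrite <- sum1_scal; apply sum1_ext; intros; ring).
  rewrite (sum1_telescope d (fun j => cap j)).
  rewrite (proj2 (Nat.leb_le 1 d)), (proj2 (Nat.leb_gt (S d) d)), Rmin_right by (lia || (apply Rlt_le, a_gt_z; lia)).
  lra.
Qed.

End Bound.

Theorem mainTheorem16 (d k : nat) (zeta : R) (alpha beta : nat -> R)
  (hzeta : 0 < zeta)
  (hk1 : (1 <= k)%nat) (hkd : (k < d)%nat)
  (hsorted : forall i : nat, (1 <= i)%nat -> (i < d)%nat -> alpha (S i) <= alpha i)
  (hk : zeta < alpha k)
  (hk' : alpha (S k) <= zeta)
  (hd : 0 <= alpha d)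
  (hperm : Permutation (map alpha (seq 1 d)) (map beta (seq 1 d))) :
  sum1 d (fun i => (sqrt (alpha i) - sqrt (beta i)) ^ 2)
  <= 4 * sum1 k (fun j =>
           (alpha' alpha k zeta j - alpha' alpha k zeta (S j)) / alpha' alpha k zeta j
           * sum1 j (fun i => alpha i - beta i))
     + INR d * zeta
     + 8 * INR k * Rmin (INR k) (ln (alpha 1%nat / zeta)) * zeta.
Proof.
  pose proof (antitone_of_succ d alpha hsorted) as Hanti.
  pose proof (sum1_perm d alpha beta hperm) as Hsum.
  assert (Halpha : forall i, (1 <= i <= d)%nat -> 0 <= alpha i <= alpha 1%nat).
  { intros i Hi. split; [apply Rle_trans with (alpha d); [exact hd |] |]; apply Hanti; lia. }
  assert (Hbeta : forall i, (1 <= i <= d)%nat -> 0 <= beta i <= alpha 1%nat).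
  { intros i Hi. destruct (perm_range d alpha beta hperm i Hi) as [m [Hm ->]].
    now apply Halpha. }
  rewrite (sum1_sqr_root_gap d alpha beta Hsum)
    by (intros i Hi; split; [apply Halpha | apply Hbeta]; exact Hi).
  pose proof (root_weighted_gap_le d k zeta alpha beta hzeta hk1 hkd Hanti hk hk' hd Hsum).
  pose proof (excess_after_bound d k zeta alpha beta hzeta hk1 hkd Hanti hk hk' Hsum Hbeta).
  set (E := sum1_after k d (fun i => Rmax (sqrt (beta i) - sqrt zeta) 0)) in *.
  assert ((INR d / 2 * sqrt zeta + E) * sqrt zeta = INR d / 2 * zeta + sqrt zeta * E).
  { rewrite <- (sqrt_sqrt zeta) at 3 by lra. ring. }
  lra.
Qed.
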